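(* Over a finite field $\mathbb{F}_q$, let $N_{\mathbb{E}_6}$ and $N_{\mathbb{E}_8}$ be the numbers of $\mathbb{F}_q$-points of $X_{\mathbb{E}_6}(1,\dots,1)$ and $X_{\mathbb{E}_8}(1,\dots,1)$, and for $\alpha\in\mathbb{F}_q^*$ let $N_{\mathbb{E}_7}(\alpha)$ be the number of $\mathbb{F}_q$-points of $X_{\mathbb{E}_7}(1,\dots,1,\alpha)$, where $\alpha$ is the value on the leaf of the long branch of $\mathbb{E}_7$ and all other values are $1$. Then $N_{\mathbb{E}_6}=q^6+q^4+q^3+q^2+1$; $N_{\mathbb{E}_7}(\alpha)=q^7+q^5-q^2-1$ if $\alpha\neq-1$; $N_{\mathbb{E}_7}(-1)=q^7+2q^5+q^3-q^2-1$; and $N_{\mathbb{E}_8}=q^8+q^6+q^5+q^4+q^3+q^2+1$.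
   Context: For a finite tree $T$ and a family $\boldsymbol{\alpha}=(\alpha_t)_{t\in T}$ of invertible elements of a field, $X_T(\boldsymbol{\alpha})$ is the affine variety with coordinates $x_t,x'_t$ ($t\in T$) defined by $x_tx'_t=1+\alpha_t\prod_{s-t}x_s$, the product over the neighbors $s$ of $t$. For $m=6,7,8$, $\mathbb{E}_m$ is the tree with a central vertex from which three branches (paths) emanate, containing $1$, $2$ and $m-4$ further vertices respectively; the long branch is the one with $m-4$ vertices. *)

From HB Require Import structures.
From mathcomp Require Import all_boot all_order all_algebra all_field.
Set Implicit Arguments. Unset Strict Implicit. Unset Printing Implicit Defensive.
Import GRing.Theory.
Local Open Scope ring_scope.

(* A tree on the vertex set 'I_m is given by a symmetric adjacency relation.
   X_T(alpha) : x_t x'_t = 1 + alpha_t * prod_{s - t} x_s.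
   Its F-points are pairs (x, x') of functions 'I_m -> F. *)
Definition XT_points (F : finFieldType) (m : nat) (adj : rel 'I_m)
  (alpha : 'I_m -> F) : {set {ffun 'I_m -> F} * {ffun 'I_m -> F}} :=
  [set p : {ffun 'I_m -> F} * {ffun 'I_m -> F} | [forall t : 'I_m,
      p.1 t * p.2 t == 1 + alpha t * \prod_(s : 'I_m | adj s t) p.1 s]].

Definition XT_count (F : finFieldType) (m : nat) (adj : rel 'I_m)
  (alpha : 'I_m -> F) : nat := #|XT_points adj alpha|.

(* E_m (m = 6,7,8): central vertex 0; short branch {1}; branch of length 2:
   0 - 2 - 3; long branch 0 - 4 - 5 - ... - (m-1), with leaf m-1. *)
Definition E_edge (i j : nat) : bool :=
  [|| (i == 0%N) && (j == 1%N), (i == 0%N) && (j == 2%N),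
      (i == 2%N) && (j == 3%N), (i == 0%N) && (j == 4%N)
    | (4 <= i)%N && (j == i.+1)].

Definition E_adj (m : nat) : rel 'I_m :=
  fun i j => E_edge i j || E_edge j i.

(* For fixed x, the equation at a vertex t has one solution x'_t when x_t <> 0,
   and q or no solutions when x_t = 0, according as 1 + alpha_t * prod x_s
   vanishes or not; so the count is a sum over x of a product of such local
   factors.  Fixing the value at the centre of E_m, this sum factors over the
   three arms.  With a unit y at the centre, an arm contributes a constant plus
   possibly a multiple of q at a single value of y, obtained by recursion along
   the arm; with 0 at the centre, the three neighbours are forced to be units
   with product -1.  What remains is a polynomial identity in q. *)

From HB Require Import structures.
From mathcomp Require Import all_boot all_order all_algebra all_field.
From mathcomp Require Import ring.
Import GRing.Theory.
Local Open Scope ring_scope.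

Lemma card_ffun_forall (aT rT : finType) (P : aT -> pred rT) :
  #|[pred f : {ffun aT -> rT} | [forall t, P t (f t)]]| = (\prod_t #|P t|)%N.
Proof.
transitivity #|family P|; first exact: eq_card.
by rewrite card_family foldrE big_map big_enum.
Qed.

Lemma card_pair_fst (T1 T2 : finType) (P : pred (T1 * T2)) :
  #|P| = (\sum_(x : T1) #|[pred y | P (x, y)]|)%N.
Proof.
under eq_bigr do rewrite -sum1_card.
by rewrite pair_big_dep /= -sum1_card; apply: eq_bigl => -[].
Qed.

Section FfunCons.

Variables (T : finType) (R : nmodType).

Definition ffun_cons {n} (a : T) (y : {ffun 'I_n -> T}) : {ffun 'I_n.+1 -> T} :=
  [ffun i => if unlift ord0 i is Some j then y j else a].

Lemma ffun_cons0 n a (y : {ffun 'I_n -> T}) : ffun_cons a y ord0 = a.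
Proof. by rewrite ffunE unlift_none. Qed.

Lemma ffun_consS n a (y : {ffun 'I_n -> T}) j : ffun_cons a y (lift ord0 j) = y j.
Proof. by rewrite ffunE liftK. Qed.

Lemma sum_ffunS n (G : {ffun 'I_n.+1 -> T} -> R) :
  \sum_x G x = \sum_a \sum_(y : {ffun 'I_n -> T}) G (ffun_cons a y).
Proof.
rewrite pair_big /= (reindex (fun p => ffun_cons p.1 p.2)) //=.
exists (fun x => (x ord0, [ffun j => x (lift ord0 j)])) => [[a y] _|x _] /=.
  by rewrite ffun_cons0; congr pair; apply/ffunP => j; rewrite ffunE ffun_consS.
by apply/ffunP => i; rewrite ffunE; case: unliftP => [j ->|->]; rewrite ?ffunE.
Qed.

Fixpoint nested_sum {n} : ({ffun 'I_n -> T} -> R) -> R :=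
  if n is n'.+1 then fun G => \sum_a nested_sum (fun y => G (ffun_cons a y))
  else fun G => G (ffun0 (card_ord 0)).

Lemma sum_ffun_nested n (G : {ffun 'I_n -> T} -> R) : \sum_x G x = nested_sum G.
Proof.
elim: n G => [|n IHn] G /=; last by rewrite sum_ffunS; apply: eq_bigr => a _.
by rewrite (big_pred1 (ffun0 (card_ord 0))) // => x; apply/esym/eqP/ffunP => -[].
Qed.

End FfunCons.

Section Counting.

Variable F : finFieldType.
Local Notation q := (#|F|%:Z).

Definition fiber (a r : F) : int := #|[pred y : F | a * y == 1 + r]|%:Z.

Lemma fiberE a r : fiber a r = if a != 0 then 1 else if 1 + r == 0 then q else 0.
Proof.
rewrite /fiber; have [->|a0] := eqVneq a 0; last first.
  rewrite (@eq_card1 _ (a^-1 * (1 + r))) // => y.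
  by rewrite inE /= (can2_eq (mulKf a0) (mulVKf a0)).
have [->|r1] := eqVneq (1 + r) 0.
  by apply: congr1; apply: eq_card => y; rewrite inE /= mul0r eqxx.
by apply: congr1; apply: eq_card0 => y; rewrite inE /= mul0r eq_sym (negbTE r1).
Qed.

Lemma fiber_unit a r : a != 0 -> fiber a r = 1.
Proof. by rewrite fiberE => ->. Qed.

Lemma XT_count_sum m (adj : rel 'I_m) (alpha : 'I_m -> F) :
  (XT_count adj alpha)%:Z =
  \sum_(x : {ffun 'I_m -> F})
    \prod_t fiber (x t) (alpha t * \prod_s (if adj s t then x s else 1)).
Proof.
rewrite /XT_count card_pair_fst -natz natr_sum; apply: eq_bigr => x _.
under [RHS]eq_bigr do rewrite /fiber -natz -big_mkcond.
rewrite -natr_prod -card_ffun_forall.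
congr _%:R; apply: eq_card => x'.
by rewrite -topredE /= inE -[LHS]/((x, x') \in XT_points adj alpha) inE.
Qed.

(* The contribution of an arm with k+1 vertices: b is the value at the vertex
   of the arm nearest to the centre, y the value at the vertex it hangs from,
   and al the coefficient at the leaf (all other coefficients are 1). *)
Fixpoint arm (al : F) k (b y : F) : int :=
  if k is k'.+1 then \sum_a fiber b (y * a) * arm al k' a b else fiber b (al * y).

Arguments arm : simpl never.

Definition arm_total al k (y : F) : int := \sum_b arm al k b y.

Definition arm_units al k : int := \sum_(y | y != 0) arm_total al k y.

Lemma sum_split (z : F) (f : F -> int) : \sum_a f a = f z + \sum_(a | a != z) f a.
Proof. by rewrite (bigD1 z). Qed.

Lemma sum_units_const (c : int) : \sum_(a : F | a != 0) c = (q - 1) * c.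
Proof.
rewrite sumr_const -mulr_natl; congr (_ * _).
have -> : #|[pred a : F | a != 0]| = #|F|.-1 by rewrite -(cardC1 (0 : F)); apply: eq_card.
by rewrite -subn1 natrB ?natz //; apply/card_gt0P; exists 0.
Qed.

Lemma sum_units_if (z : F) (c : int) : z != 0 ->
  \sum_(a : F | a != 0) (if a == z then c else 0) = c.
Proof.
move=> z0; rewrite -big_mkcondr (big_pred1 z) // => a /=.
by rewrite andbC; case: eqP => // ->.
Qed.

Lemma add1_mul_eq0 (y a : F) : y != 0 -> (1 + y * a == 0) = (a == - y^-1).
Proof.
by move=> y0; rewrite addrC addr_eq0 -[RHS](inj_eq (mulfI y0)) mulrN mulfV.
Qed.

Lemma arm0 al b y : arm al 0 b y = fiber b (al * y).
Proof. by []. Qed.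

Lemma armSE al k b y : arm al k.+1 b y = \sum_a fiber b (y * a) * arm al k a b.
Proof. by []. Qed.

Lemma armS al k b y : arm al k.+1 b y =
  if b != 0 then arm_total al k b else if y != 0 then q * arm al k (- y^-1) 0 else 0.
Proof.
rewrite armSE; have [->|b0] /= := eqVneq b 0; last first.
  by apply: eq_bigr => a _; rewrite fiber_unit // mul1r.
under eq_bigr do rewrite fiberE eqxx /=.
have [->|y0] /= := eqVneq y 0.
  by rewrite big1 // => a _; rewrite mul0r addr0 oner_eq0 mul0r.
rewrite (bigD1 (- y^-1)) //= add1_mul_eq0 // eqxx big1 ?addr0 // => a.
by rewrite add1_mul_eq0 // => /negbTE ->; rewrite mul0r.
Qed.

Lemma arm_succ_unit al k b y : b != 0 -> arm al k.+1 b y = arm_total al k b.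
Proof. by move=> b0; rewrite armS b0. Qed.

Lemma arm_succ00 al k : arm al k.+1 0 0 = 0.
Proof. by rewrite armS eqxx. Qed.

Lemma arm_total_succ al k y : y != 0 ->
  arm_total al k.+1 y = q * arm al k (- y^-1) 0 + arm_units al k.
Proof.
move=> y0; rewrite /arm_total (sum_split 0); congr (_ + _); first by rewrite armS eqxx y0.
by apply: eq_bigr => b b0; rewrite arm_succ_unit.
Qed.

Lemma arm_total_succ0 al k : arm_total al k.+1 0 = arm_units al k.
Proof.
rewrite /arm_total (sum_split 0) arm_succ00 add0r.
by apply: eq_bigr => b b0; rewrite arm_succ_unit.
Qed.

Lemma arm_total0 al y : arm_total al 0 y = (q - 1) + (if 1 + al * y == 0 then q else 0).
Proof.
rewrite /arm_total (sum_split 0) arm0 fiberE eqxx addrC; congr (_ + _).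
by rewrite -[q - 1]mulr1 -sum_units_const; apply: eq_bigr => b b0; rewrite arm0 fiber_unit.
Qed.

Lemma arm_units0 al : al != 0 -> arm_units al 0 = (q - 1) * (q - 1) + q.
Proof.
move=> al0; rewrite /arm_units; under eq_bigr => y y0 do rewrite arm_total0 add1_mul_eq0 //.
by rewrite big_split /= sum_units_const sum_units_if // oppr_eq0 invr_eq0.
Qed.

Lemma arm_total1 al y : y != 0 -> arm_total al 1 y = q + arm_units al 0.
Proof.
by move=> y0; rewrite arm_total_succ // arm0 fiber_unit ?mulr1 // oppr_eq0 invr_eq0.
Qed.

Lemma arm_units1 al : arm_units al 1 = (q - 1) * (q + arm_units al 0).
Proof.
by rewrite /arm_units; under eq_bigr => y y0 do rewrite arm_total1 //; rewrite sum_units_const.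
Qed.

Lemma arm_total2 al y : y != 0 ->
  arm_total al 2 y = q * (q - 1) + arm_units al 1 + (if y == al then q * q else 0).
Proof.
move=> y0; rewrite arm_total_succ // armS oppr_eq0 invr_eq0 y0 arm_total0.
have -> : (1 + al * - y^-1 == 0) = (y == al).
  by rewrite mulrN subr_eq0 eq_sym -(inj_eq (mulIf y0)) mulfVK // mul1r eq_sym.
by case: eqP => _; rewrite ?mulr0 ?addr0 mulrDr addrAC.
Qed.

Lemma arm_units2 al : al != 0 ->
  arm_units al 2 = (q - 1) * (q * (q - 1) + arm_units al 1) + q * q.
Proof.
move=> al0; rewrite /arm_units; under eq_bigr => y y0 do rewrite arm_total2 //.
by rewrite big_split /= sum_units_const sum_units_if.
Qed.

Lemma arm_total3 al y : y != 0 ->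
  arm_total al 3 y = q * (q + arm_units al 0) + arm_units al 2.
Proof.
move=> y0; have y'0 : - y^-1 != 0 by rewrite oppr_eq0 invr_eq0.
by rewrite arm_total_succ // arm_succ_unit // arm_total1.
Qed.

(* Vertex 0 of E_m is the centre and 1, 2, 4 are its neighbours. *)
Definition star_sum (f g h : F -> F -> int) : int :=
  \sum_x0 \sum_x1 \sum_x2 \sum_x4 fiber x0 (x1 * (x2 * x4)) * f x1 x0 * g x2 x0 * h x4 x0.

Lemma sum_star_unit_center (f g h : F -> F -> int) y : y != 0 ->
  \sum_x1 \sum_x2 \sum_x4 fiber y (x1 * (x2 * x4)) * f x1 y * g x2 y * h x4 y =
  (\sum_x1 f x1 y) * (\sum_x2 g x2 y) * (\sum_x4 h x4 y).
Proof.
move=> y0; rewrite -mulrA mulr_suml; apply: eq_bigr => x1 _.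
rewrite big_distrlr /= mulr_sumr; apply: eq_bigr => x2 _.
by rewrite mulr_sumr; apply: eq_bigr => x4 _; rewrite fiber_unit // mul1r !mulrA.
Qed.

(* With 0 at the centre its three neighbours must be units with product -1. *)
Lemma sum_star_zero_center al1 al2 al3 k2 k3 :
  \sum_x1 \sum_x2 \sum_x4
    fiber 0 (x1 * (x2 * x4)) * arm al1 0 x1 0 * arm al2 k2.+1 x2 0 * arm al3 k3.+1 x4 0 =
  q * (arm_units al2 k2 * arm_units al3 k3).
Proof.
rewrite -!arm_total_succ0 /arm_total big_distrlr /= mulr_sumr exchange_big.
apply: eq_bigr => x2 _; rewrite exchange_big mulr_sumr; apply: eq_bigr => x4 _.
have [->|x2_0] := eqVneq x2 0.
  by rewrite arm_succ00 big1 => [|x1 _]; rewrite ?(mulr0, mul0r).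
have [->|x4_0] := eqVneq x4 0.
  by rewrite arm_succ00 big1 => [|x1 _]; rewrite ?(mulr0, mul0r).
have p0 : x2 * x4 != 0 by rewrite mulf_neq0.
have fiber_center x1 : fiber 0 (x1 * (x2 * x4)) = if x1 == - (x2 * x4)^-1 then q else 0.
  by rewrite fiberE eqxx mulrC add1_mul_eq0.
rewrite (sum_split (- (x2 * x4)^-1)) big1 ?addr0 => [|x1 /negbTE x1_neq]; last first.
  by rewrite fiber_center x1_neq !mul0r.
by rewrite fiber_center eqxx arm0 fiber_unit ?mulr1 ?mulrA // oppr_eq0 invr_eq0.
Qed.

Lemma star_sum_arms al1 al2 al3 k2 k3 :
  star_sum (arm al1 0) (arm al2 k2.+1) (arm al3 k3.+1) =
  q * (arm_units al2 k2 * arm_units al3 k3) +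
  \sum_(y | y != 0) arm_total al1 0 y * arm_total al2 k2.+1 y * arm_total al3 k3.+1 y.
Proof.
rewrite /star_sum (sum_split 0) sum_star_zero_center; congr (_ + _).
by apply: eq_bigr => y y0; rewrite sum_star_unit_center.
Qed.

Lemma sum_units_bump (f : F -> int) (c d : int) (z : F) : z != 0 ->
  \sum_(y | y != 0) f y * (c + (if y == z then d else 0)) =
  (\sum_(y | y != 0) f y) * c + f z * d.
Proof.
move=> z0; under eq_bigr do rewrite mulrDr.
rewrite big_split /= mulr_suml -(@sum_units_if z (f z * d) z0); congr (_ + _).
by apply: eq_bigr => y _; case: eqP => [->|_]; rewrite ?mulr0.
Qed.

Lemma star_sum_E6 :
  star_sum (arm 1 0) (arm 1 1) (arm 1 1) = q ^+ 6 + q ^+ 4 + q ^+ 3 + q ^+ 2 + 1.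
Proof.
rewrite star_sum_arms; under eq_bigr => y y0 do rewrite !arm_total1 //.
by rewrite -!mulr_suml -/(arm_units 1 0) arm_units0 ?oner_neq0 //; ring.
Qed.

Lemma star_sum_E7 al : al != 0 -> star_sum (arm 1 0) (arm 1 1) (arm al 2) =
  q ^+ 7 + q ^+ 5 - q ^+ 2 - 1 + (if al == -1 then q ^+ 5 + q ^+ 3 else 0).
Proof.
move=> al0; rewrite star_sum_arms.
under eq_bigr => y y0 do rewrite arm_total1 // arm_total2 //.
rewrite sum_units_bump // -mulr_suml -/(arm_units 1 0) arm_total0 mul1r.
rewrite arm_units1 !arm_units0 ?oner_neq0 // [1 + al]addrC addr_eq0.
by case: eqP => _; ring.
Qed.

Lemma star_sum_E8 : star_sum (arm 1 0) (arm 1 1) (arm 1 3) =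
  q ^+ 8 + q ^+ 6 + q ^+ 5 + q ^+ 4 + q ^+ 3 + q ^+ 2 + 1.
Proof.
rewrite star_sum_arms; under eq_bigr => y y0 do rewrite arm_total1 // arm_total3 //.
rewrite -!mulr_suml -/(arm_units 1 0) arm_units2 ?oner_neq0 // arm_units1.
by rewrite arm_units0 ?oner_neq0 //; ring.
Qed.

Lemma XT_count_E6_star :
  (XT_count (@E_adj 6) (fun _ => (1 : F)))%:Z = star_sum (arm 1 0) (arm 1 1) (arm 1 1).
Proof.
rewrite XT_count_sum sum_ffun_nested /star_sum /arm /=.
apply: eq_bigr => x0 _; apply: eq_bigr => x1 _; apply: eq_bigr => x2 _.
rewrite exchange_big; apply: eq_bigr => x4 _ /=.
rewrite -mulrA big_distrlr /= mulr_sumr; apply: eq_bigr => x3 _.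
rewrite mulr_sumr; apply: eq_bigr => x5 _.
rewrite !big_ord_recl !big_ord0 /= !ffun_consS !ffun_cons0 /= !mul1r !mulr1.
by rewrite !mulrA.
Qed.

Lemma XT_count_E7_star al :
  (XT_count (@E_adj 7) (fun t : 'I_7 => if val t == 6%N then al else 1))%:Z =
  star_sum (arm 1 0) (arm 1 1) (arm al 2).
Proof.
rewrite XT_count_sum sum_ffun_nested /star_sum /arm /=.
apply: eq_bigr => x0 _; apply: eq_bigr => x1 _; apply: eq_bigr => x2 _.
rewrite exchange_big; apply: eq_bigr => x4 _ /=.
rewrite -mulrA big_distrlr /= mulr_sumr; apply: eq_bigr => x3 _.
rewrite mulr_sumr; apply: eq_bigr => x5 _.
rewrite !mulr_sumr; apply: eq_bigr => x6 _.
rewrite !big_ord_recl !big_ord0 /= !ffun_consS !ffun_cons0 /= !mul1r !mulr1.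
by rewrite !mulrA.
Qed.

Lemma XT_count_E8_star :
  (XT_count (@E_adj 8) (fun _ => (1 : F)))%:Z = star_sum (arm 1 0) (arm 1 1) (arm 1 3).
Proof.
rewrite XT_count_sum sum_ffun_nested /star_sum /arm /=.
apply: eq_bigr => x0 _; apply: eq_bigr => x1 _; apply: eq_bigr => x2 _.
rewrite exchange_big; apply: eq_bigr => x4 _ /=.
rewrite -mulrA big_distrlr /= mulr_sumr; apply: eq_bigr => x3 _.
rewrite mulr_sumr; apply: eq_bigr => x5 _.
rewrite !mulr_sumr; apply: eq_bigr => x6 _.
rewrite !mulr_sumr; apply: eq_bigr => x7 _.
rewrite !big_ord_recl !big_ord0 /= !ffun_consS !ffun_cons0 /= !mul1r !mulr1.
by rewrite !mulrA.
Qed.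

End Counting.

Theorem mainTheorem18 (F : finFieldType) :
  let q : int := (#|F|)%:Z in
  [/\ (XT_count (@E_adj 6) (fun _ => (1 : F)))%:Z = q ^+ 6 + q ^+ 4 + q ^+ 3 + q ^+ 2 + 1,
      (forall alpha : F, alpha != 0 -> alpha != -1 ->
         (XT_count (@E_adj 7) (fun t : 'I_7 => if val t == 6%N then alpha else 1))%:Z
           = q ^+ 7 + q ^+ 5 - q ^+ 2 - 1),
      (XT_count (@E_adj 7) (fun t : 'I_7 => if val t == 6%N then -1 else 1 : F))%:Z
           = q ^+ 7 + 2 * q ^+ 5 + q ^+ 3 - q ^+ 2 - 1
    & (XT_count (@E_adj 8) (fun _ => (1 : F)))%:Z
           = q ^+ 8 + q ^+ 6 + q ^+ 5 + q ^+ 4 + q ^+ 3 + q ^+ 2 + 1].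
Proof.
move=> q; rewrite {}/q; split.
- by rewrite XT_count_E6_star star_sum_E6.
- by move=> al al0 /negbTE alN1; rewrite XT_count_E7_star star_sum_E7 // alN1 addr0.
- rewrite XT_count_E7_star star_sum_E7 ?eqxx ?oppr_eq0 ?oner_eq0 //; ring.
- by rewrite XT_count_E8_star star_sum_E8.
Qed.
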